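(* Let $n\ge1$, $m\ge0$, $a,b>0$, $I_{m,n,s}(x)=\int_s^x(1+t)^nt^m\,dt$, $\mu_s=\frac{(1+a)^na^mb+nI_{m,n-1,s}(a)}{I_{m,n,s}(a)}$ and $\tilde\psi_s(x)=\frac{\mu_sI_{m,n,s}(x)-nI_{m,n-1,s}(x)}{(1+x)^nx^m}$. Assume $\mu_0\le n$ and let $\lambda\in[0,a)$ be the unique solution of $\mu_\lambda(1+\lambda)=n$. Then $\tilde\psi_\lambda$ is convex on $(0,\infty)$. In particular, for all $x\in[\lambda,a]$, $\frac{b}{a}x\ge\tilde\psi_\lambda(x)$. *)

From Stdlib Require Import Reals Lra.
From Coquelicot Require Import Coquelicot.
Open Scope R_scope.

Definition Iint (m n : nat) (s x : R) : R :=
  RInt (fun t => (1 + t) ^ n * t ^ m) s x.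

Definition mu (m n : nat) (a b s : R) : R :=
  ((1 + a) ^ n * a ^ m * b + INR n * Iint m (n - 1) s a) / Iint m n s a.

Definition psi_tilde (m n : nat) (a b s x : R) : R :=
  (mu m n a b s * Iint m n s x - INR n * Iint m (n - 1) s x)
  / ((1 + x) ^ n * x ^ m).

(* f is convex on the set D (D assumed convex, as for intervals) *)
Definition convex_on (f : R -> R) (D : R -> Prop) : Prop :=
  forall x y t, D x -> D y -> 0 <= t <= 1 ->
    f (t * x + (1 - t) * y) <= t * f x + (1 - t) * f y.

From Stdlib Require Import Reals Lra Lia.
From Coquelicot Require Import Coquelicot.
Open Scope R_scope.

(* Write psi = N / W with W x = (1+x)^n x^m and N = mu I_{m,n,lam} - n I_{m,n-1,lam}.
   The relation mu (1+lam) = n makes N' = mu (1+x)^(n-1) x^m (x - lam), so N vanishes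
   at lam and is nonnegative on [0, oo).  Differentiating twice gives psi'' = c E / W
   with an explicit c > 0 and E = N - mu W x U / D for polynomials U and D; E is
   nonnegative wherever U <= 0, in particular on (0, lam], and E' is a nonnegative
   multiple of m, so E >= 0 and psi is convex on (0, oo).  The bound is then the chord
   inequality between lam, near which psi y <= mu (y - lam), and a, where psi a = b. *)

Lemma continuity_pt_of_is_derive (f : R -> R) x l :
  is_derive f x l -> continuity_pt f x.
Proof.
  intros Hf; apply continuity_pt_filterlim.
  apply (@ex_derive_continuous R_AbsRing R_NormedModule); now exists l.
Qed.

Lemma mean_value (f df : R -> R) a b : a <= b ->
  (forall x, a < x < b -> is_derive f x (df x)) ->
  (forall x, a <= x <= b -> continuity_pt f x) ->
  exists c, a <= c <= b /\ f b - f a = df c * (b - a).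
Proof.
  intros Hab Hd Hc.
  destruct (MVT_gen f a b df) as [c Hc'];
    rewrite ?Rmin_left, ?Rmax_right in * by lra; eauto.
Qed.

Lemma le_of_is_derive_nonneg (f df : R -> R) a b : a <= b ->
  (forall x, a < x < b -> is_derive f x (df x)) ->
  (forall x, a <= x <= b -> continuity_pt f x) ->
  (forall x, a <= x <= b -> 0 <= df x) -> f a <= f b.
Proof.
  intros Hab Hd Hc Hpos.
  destruct (mean_value f df a b Hab Hd Hc) as [c [Hc' E]].
  pose proof (Hpos c Hc'); nra.
Qed.

Lemma convex_on_of_is_derive_nondecreasing (D : R -> Prop) (f df : R -> R) :
  is_connected D ->
  (forall x, D x -> is_derive f x (df x)) ->
  (forall x y, D x -> D y -> x <= y -> df x <= df y) ->
  convex_on f D.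
Proof.
  intros HD Hd Hmono.
  assert (Hlt : forall x y t, D x -> D y -> x < y -> 0 <= t <= 1 ->
            f (t * x + (1 - t) * y) <= t * f x + (1 - t) * f y).
  { intros x y t Hx Hy Hxy Ht.
    set (z := t * x + (1 - t) * y).
    assert (Hz : x <= z <= y) by (unfold z; nra).
    assert (HDu : forall u, x <= u <= y -> D u) by (intros u; apply HD; auto).
    assert (Hmv : forall u v, x <= u <= v -> v <= y ->
              exists c, u <= c <= v /\ f v - f u = df c * (v - u)).
    { intros u v Huv Hvy; apply mean_value; try lra.
      - intros w Hw; apply Hd, HDu; lra.
      - intros w Hw; apply (continuity_pt_of_is_derive f w (df w)), Hd, HDu; lra. }
    destruct (Hmv x z) as [c1 [Hc1 E1]]; try lra.
    destruct (Hmv z y) as [c2 [Hc2 E2]]; try lra.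
    assert (Hslope : df c1 <= df c2) by (apply Hmono; try apply HDu; lra).
    assert (Hgap : t * f x + (1 - t) * f y - f z
                   = t * (1 - t) * (y - x) * (df c2 - df c1)).
    { transitivity ((1 - t) * (f y - f z) - t * (f z - f x)); [ring|].
      rewrite E1, E2; unfold z; ring. }
    assert (0 <= t * (1 - t) * (y - x)) by (apply Rmult_le_pos; nra).
    nra. }
  intros x y t Hx Hy Ht.
  destruct (Rtotal_order x y) as [Hxy|[<-|Hxy]].
  - now apply Hlt.
  - replace (t * x + (1 - t) * x) with x by ring; lra.
  - replace (t * x + (1 - t) * y) with ((1 - t) * y + (1 - (1 - t)) * x) by ring.
    pose proof (Hlt y x (1 - t) Hy Hx Hxy ltac:(lra)); lra.
Qed.

Lemma convex_on_of_is_derive2 (D : R -> Prop) (f df d2f : R -> R) :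
  is_connected D ->
  (forall x, D x -> is_derive f x (df x)) ->
  (forall x, D x -> is_derive df x (d2f x)) ->
  (forall x, D x -> 0 <= d2f x) ->
  convex_on f D.
Proof.
  intros HD Hd Hd2 Hpos.
  apply (convex_on_of_is_derive_nondecreasing D f df HD Hd).
  intros x y Hx Hy Hxy.
  assert (HDu : forall u, x <= u <= y -> D u) by (intros u; apply HD; auto).
  apply (le_of_is_derive_nonneg df d2f x y Hxy).
  - intros u Hu; apply Hd2, HDu; lra.
  - intros u Hu; apply (continuity_pt_of_is_derive df u (d2f u)), Hd2, HDu; lra.
  - intros u Hu; apply Hpos, HDu; lra.
Qed.

Lemma convex_le_chord_from_zero (D : R -> Prop) (f : R -> R) C l x a :
  convex_on f D -> (forall y, l < y <= a -> D y) -> l < x <= a -> 0 <= f a ->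
  (forall y, l < y < x -> f y <= C * (y - l)) ->
  f x <= (x - l) / (a - l) * f a.
Proof.
  intros Hconv HD Hx Ha Hlin.
  apply Rle_plus_epsilon; intros eps Heps.
  set (h := Rmin ((x - l) / 2) (eps / (Rabs C + 1))).
  assert (Hh : 0 < h <= (x - l) / 2).
  { split; [apply Rmin_glb_lt|apply Rmin_l]; [lra|].
    apply Rdiv_lt_0_compat; [lra|pose proof (Rabs_pos C); lra]. }
  assert (Hh_eps : Rabs C * h <= eps).
  { apply Rle_trans with ((Rabs C + 1) * h); [lra|].
    apply Rle_trans with ((Rabs C + 1) * (eps / (Rabs C + 1))).
    - apply Rmult_le_compat_l; [pose proof (Rabs_pos C); lra|apply Rmin_r].
    - right; field; pose proof (Rabs_pos C); lra. }
  set (y := l + h); set (t := (a - x) / (a - y)).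
  assert (Ht : 0 <= t <= 1).
  { unfold t; split; [apply Rdiv_le_0_compat; unfold y; lra|].
    apply (Rdiv_le_1 (a - x) (a - y)); unfold y; lra. }
  pose proof (Hconv y a t ltac:(apply HD; unfold y; lra)
                ltac:(apply HD; lra) Ht) as Hc.
  replace (t * y + (1 - t) * a) with x in Hc by (unfold t, y; field; lra).
  assert (Hy : t * f y <= eps).
  { pose proof (Hlin y ltac:(unfold y; lra)) as Hfy.
    replace (y - l) with h in Hfy by (unfold y; ring).
    assert (C * h <= Rabs C * h) by (apply Rmult_le_compat_r; [lra|apply Rle_abs]).
    destruct (Rle_lt_dec (f y) 0); nra. }
  assert (Ha' : (1 - t) * f a <= (x - l) / (a - l) * f a).
  { apply Rmult_le_compat_r; [lra|].
    replace (1 - t) with ((x - y) / (a - y)) by (unfold t, y; field; lra).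
    apply Rmult_le_reg_r with ((a - y) * (a - l)); [unfold y; nra|].
    unfold Rdiv; field_simplify; unfold y; nra. }
  lra.
Qed.

Lemma is_derive_RInt_upper (f : R -> R) s x :
  (forall t, continuous f t) -> is_derive (fun y => RInt f s y) x (f x).
Proof.
  intros Hf; apply is_derive_RInt with (a := s); [|apply Hf].
  exists (mkposreal 1 Rlt_0_1); intros y _.
  apply RInt_correct, ex_RInt_continuous; intros; apply Hf.
Qed.

Lemma continuous_Iint_integrand (m n : nat) t : continuous (fun t => (1 + t) ^ n * t ^ m) t.
Proof. apply (@ex_derive_continuous R_AbsRing R_NormedModule); auto_derive; auto. Qed.

Lemma Iint_pos m n s x : 0 <= s < x -> 0 < Iint m n s x.
Proof.
  intros Hs; apply RInt_gt_0; [lra| |intros; apply continuous_Iint_integrand].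
  intros t Ht; apply Rmult_lt_0_compat; apply pow_lt; lra.
Qed.

Section Psi.

Variables (k m : nat) (mu l : R).
Hypothesis mu_l : mu * (1 + l) = INR (S k).
Hypothesis l_ge0 : 0 <= l.

Let n := INR (S k).
Let M := INR m.

Let n_pos : 0 < n.
Proof. apply lt_0_INR; lia. Qed.

Let M_ge0 : 0 <= M.
Proof. apply pos_INR. Qed.

Let mu_pos : 0 < mu.
Proof.
  pose proof n_pos; unfold n in *.
  destruct (Rle_lt_dec mu 0); [nra|assumption].
Qed.

Definition weight x := (1 + x) ^ S k * x ^ m.
Definition numer x := mu * Iint m (S k) l x - n * Iint m k l x.
Definition psi x := numer x / weight x.
Definition weight_logder x := n / (1 + x) + M / x.
Definition dpsi x := mu * (x - l) / (1 + x) - weight_logder x * psi x.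

Lemma weight_ge0 x : 0 <= x -> 0 <= weight x.
Proof. intros; apply Rmult_le_pos; apply pow_le; lra. Qed.

Lemma weight_pos x : 0 < x -> 0 < weight x.
Proof. intros; apply Rmult_lt_0_compat; apply pow_lt; lra. Qed.

Lemma weight_le x y : 0 <= x <= y -> weight x <= weight y.
Proof.
  intros; apply Rmult_le_compat; try (apply pow_le; lra); apply pow_incr; lra.
Qed.

Lemma is_derive_weight x : 0 < x -> is_derive weight x (weight x * weight_logder x).
Proof.
  intros Hx; unfold weight, weight_logder, n, M.
  auto_derive; [lra|].
  change (match k with 0%nat => 1 | S _ => INR k + 1 end) with (INR (S k)).
  destruct m as [|j]; simpl pred; rewrite <- !tech_pow_Rmult; simpl INR; field; lra.
Qed.

Lemma numer_at_l : numer l = 0.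
Proof. unfold numer, Iint; rewrite !RInt_point; unfold zero; simpl; ring. Qed.

Lemma is_derive_numer x : is_derive numer x (mu * (1 + x) ^ k * x ^ m * (x - l)).
Proof.
  unfold numer, Iint.
  replace (mu * (1 + x) ^ k * x ^ m * (x - l))
    with (mu * ((1 + x) ^ S k * x ^ m) - n * ((1 + x) ^ k * x ^ m))
    by (unfold n; rewrite <- mu_l; simpl; ring).
  apply (@is_derive_minus R_AbsRing R_NormedModule); apply is_derive_scal;
    apply (is_derive_RInt_upper (fun t => (1 + t) ^ _ * t ^ m));
    intros; apply continuous_Iint_integrand.
Qed.

Lemma numer_nonneg x : 0 <= x -> 0 <= numer x.
Proof.
  intros Hx.
  assert (Hfactor : forall c, 0 <= c -> 0 <= mu * (1 + c) ^ k * c ^ m).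
  { intros c Hc; repeat apply Rmult_le_pos; try apply pow_le; lra. }
  assert (Hcont : forall c, continuity_pt numer c)
    by (intros c; apply (continuity_pt_of_is_derive _ _ _ (is_derive_numer c))).
  destruct (Rle_lt_dec l x) as [Hlx|Hxl].
  - rewrite <- numer_at_l.
    apply (le_of_is_derive_nonneg numer _ l x Hlx (fun c _ => is_derive_numer c));
      [intros; apply Hcont|].
    intros c Hc; pose proof (Hfactor c ltac:(lra)); nra.
  - cut (- numer x <= - numer l); [rewrite numer_at_l; lra|].
    apply (le_of_is_derive_nonneg (fun y => - numer y)
             (fun c => - (mu * (1 + c) ^ k * c ^ m * (c - l))) x l); [lra| | |].
    + intros c _; apply (is_derive_opp numer), is_derive_numer.
    + intros c _; apply continuity_pt_opp, Hcont.
    + intros c Hc; pose proof (Hfactor c ltac:(lra)); nra.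
Qed.

Lemma psi_at_l : psi l = 0.
Proof. unfold psi; rewrite numer_at_l; unfold Rdiv; ring. Qed.

Lemma is_derive_psi x : 0 < x -> is_derive psi x (dpsi x).
Proof.
  intros Hx; pose proof (weight_pos x Hx) as HW.
  refine (eq_ind (A := R) _ (is_derive psi x)
            (is_derive_div numer weight x _ _ (is_derive_numer x)
               (is_derive_weight x Hx) ltac:(lra)) _ _).
  unfold dpsi, psi; unfold weight in *; simpl pow.
  assert (0 < (1 + x) ^ k) by (apply pow_lt; lra).
  assert (0 < x ^ m) by (apply pow_lt; lra).
  field; repeat split; lra.
Qed.

Definition upoly x := (n * x + M * (1 + x)) * (x - l) - (1 + l) * x.
Definition dpoly x := (n * x + M * (1 + x)) ^ 2 + n * x ^ 2 + M * (1 + x) ^ 2.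
(* [dpoly x = x^2 (1+x)^2 c], where [c] is the positive factor of [psi''] in
   [is_derive_dpsi]. *)
Definition excess x := numer x - mu * (weight x * (x * upoly x / dpoly x)).

Lemma dpoly_pos x : 0 < x -> 0 < dpoly x.
Proof.
  intros Hx; unfold dpoly.
  pose proof (pow2_ge_0 (n * x + M * (1 + x))); pose proof (pow2_ge_0 (1 + x)).
  assert (0 < x ^ 2) by (apply pow_lt; lra); nra.
Qed.

Lemma is_derive_dpsi x : 0 < x ->
  is_derive dpsi x
    ((weight_logder x ^ 2 + n / (1 + x) ^ 2 + M / x ^ 2) * (excess x / weight x)).
Proof.
  intros Hx; pose proof (weight_pos x Hx); pose proof (dpoly_pos x Hx).
  assert (Hshift : is_derive (fun y => mu * (y - l) / (1 + y)) x
                     (mu * (1 + l) / (1 + x) ^ 2))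
    by (auto_derive; [lra|field; lra]).
  assert (Hlogder : is_derive weight_logder x (- n / (1 + x) ^ 2 - M / x ^ 2))
    by (unfold weight_logder; auto_derive; [repeat split; lra|field; lra]).
  refine (eq_ind (A := R) _ (is_derive dpsi x)
            (@is_derive_minus R_AbsRing R_NormedModule _ _ x _ _ Hshift
               (@is_derive_mult R_AbsRing _ _ x _ _ Hlogder (is_derive_psi x Hx)
                  Rmult_comm)) _ _).
  unfold dpsi, psi, excess, weight_logder, upoly, dpoly, minus, plus, opp, mult in *; simpl.
  unfold n, M in *.
  field; lra.
Qed.

Lemma is_derive_excess x : 0 < x ->
  is_derive excess x
    (2 * mu * M * weight x * x * (1 + x) * (l * (n + M + 1) + M + 1) / dpoly x ^ 2).
Proof.
  intros Hx; pose proof (weight_pos x Hx); pose proof (dpoly_pos x Hx) as HD.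
  assert (Hratio : is_derive (fun y => y * upoly y / dpoly y) x
    (((upoly x + x * ((n + M) * (x - l) + (n * x + M * (1 + x)) - (1 + l))) * dpoly x
      - x * upoly x * (2 * (n * x + M * (1 + x)) * (n + M) + 2 * n * x + 2 * M * (1 + x)))
     / dpoly x ^ 2)).
  { unfold upoly, dpoly in *; auto_derive; [lra|field; lra]. }
  refine (eq_ind (A := R) _ (is_derive excess x)
            (@is_derive_minus R_AbsRing R_NormedModule _ _ x _ _ (is_derive_numer x)
               (is_derive_scal _ x mu _
                  (@is_derive_mult R_AbsRing _ _ x _ _ (is_derive_weight x Hx) Hratio
                     Rmult_comm))) _ _).
  unfold weight_logder, upoly, dpoly, minus, plus, opp, mult, scal in *; simpl.
  unfold weight, n, M in *; simpl pow.
  assert (0 < (1 + x) ^ k) by (apply pow_lt; lra).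
  assert (0 < x ^ m) by (apply pow_lt; lra).
  field; repeat split; lra.
Qed.

Lemma continuity_pt_excess x : 0 < dpoly x -> continuity_pt excess x.
Proof.
  intros HD; apply (continuity_pt_of_is_derive _ _ (Derive excess x)), Derive_correct.
  assert (ex_derive numer x) by (eexists; apply is_derive_numer).
  unfold excess, weight, upoly, dpoly in *; auto_derive; repeat split; auto; lra.
Qed.

Lemma excess_le y x : 0 <= y <= x -> 0 < dpoly y -> excess y <= excess x.
Proof.
  intros Hyx Hy.
  assert (HD : forall c, y <= c <= x -> 0 < dpoly c).
  { intros c Hc; destruct (Req_dec c y) as [->|]; [easy|apply dpoly_pos; lra]. }
  apply (le_of_is_derive_nonneg excess (fun c =>
    2 * mu * M * weight c * c * (1 + c) * (l * (n + M + 1) + M + 1) / dpoly c ^ 2)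
    y x ltac:(lra)).
  - intros c Hc; apply is_derive_excess; lra.
  - intros c Hc; apply continuity_pt_excess, HD, Hc.
  - intros c Hc; pose proof (HD c Hc); pose proof (weight_ge0 c ltac:(lra)).
    assert (0 <= l * (n + M + 1) + M + 1) by nra.
    apply Rdiv_le_0_compat; [|apply pow_lt; lra].
    set (w := weight c) in *; clearbody w.
    repeat apply Rmult_le_pos; lra.
Qed.

Lemma upoly_nonpos x : 0 <= x <= l -> upoly x <= 0.
Proof.
  intros Hx; unfold upoly.
  assert (0 <= n * x + M * (1 + x)) by nra.
  assert (0 <= (1 + l) * x) by nra.
  nra.
Qed.

Lemma excess_nonneg_of_upoly_nonpos x : 0 <= x -> upoly x <= 0 -> 0 <= excess x.
Proof.
  intros Hx HU; pose proof (numer_nonneg x Hx); pose proof (weight_ge0 x Hx).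
  assert (Hratio : x * upoly x / dpoly x <= 0).
  { destruct (Req_dec x 0) as [->|]; [unfold Rdiv; rewrite Rmult_0_l, Rmult_0_l; lra|].
    pose proof (dpoly_pos x ltac:(lra)).
    apply Rmult_le_reg_r with (dpoly x); [easy|].
    unfold Rdiv; rewrite Rmult_assoc, Rinv_l by lra; nra. }
  assert (0 <= mu * (weight x * - (x * upoly x / dpoly x)))
    by (apply Rmult_le_pos; [lra|apply Rmult_le_pos; lra]).
  unfold excess; lra.
Qed.

Lemma excess_nonneg x : 0 < x -> 0 <= excess x.
Proof.
  intros Hx.
  (* [dpoly 0 = 0] when [m = 0], so the base point then moves to the root of [upoly]. *)
  assert (Hbase : exists y0, 0 <= y0 /\ 0 < dpoly y0 /\
                    forall y, 0 <= y <= y0 -> upoly y <= 0).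
  { destruct (Nat.eq_dec m 0) as [Hm0|Hm].
    - assert (HM : M = 0) by (unfold M; rewrite Hm0; reflexivity).
      exists (l + (1 + l) / n); split; [|split].
      + apply Rplus_le_le_0_compat; [lra|apply Rdiv_le_0_compat; lra].
      + apply dpoly_pos, Rplus_le_lt_0_compat; [lra|apply Rdiv_lt_0_compat; lra].
      + intros y Hy; unfold upoly; rewrite HM.
        assert (n * (y - l) <= 1 + l).
        { replace (1 + l) with (n * ((1 + l) / n)) by (field; lra); nra. }
        nra.
    - exists l; split; [lra|split; [|apply upoly_nonpos]].
      assert (0 < M) by (apply lt_0_INR; lia).
      unfold dpoly; pose proof (pow2_ge_0 (n * l + M * (1 + l))); pose proof (pow2_ge_0 l).
      assert (0 < (1 + l) ^ 2) by (apply pow_lt; lra); nra. }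
  destruct Hbase as [y0 [Hy0 [HD Hup]]].
  destruct (Rle_lt_dec x y0).
  - apply excess_nonneg_of_upoly_nonpos, Hup; lra.
  - apply Rle_trans with (excess y0); [apply excess_nonneg_of_upoly_nonpos, Hup; lra|].
    apply excess_le; [lra|easy].
Qed.

Lemma psi_convex : convex_on psi (fun x => 0 < x).
Proof.
  apply (convex_on_of_is_derive2 _ psi dpsi
    (fun x => (weight_logder x ^ 2 + n / (1 + x) ^ 2 + M / x ^ 2) * (excess x / weight x))).
  - intros a b x Ha Hb Hx; lra.
  - exact is_derive_psi.
  - exact is_derive_dpsi.
  - intros x Hx; pose proof (excess_nonneg x Hx); pose proof (weight_pos x Hx).
    apply Rmult_le_pos; [|apply Rdiv_le_0_compat; lra].
    pose proof (pow2_ge_0 (weight_logder x)).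
    assert (0 <= n / (1 + x) ^ 2) by (apply Rdiv_le_0_compat; [lra|apply pow_lt; lra]).
    assert (0 <= M / x ^ 2) by (apply Rdiv_le_0_compat; [lra|apply pow_lt; lra]).
    lra.
Qed.

Lemma psi_le_linear y : l < y -> psi y <= mu * (y - l).
Proof.
  intros Hy; pose proof (weight_pos y ltac:(lra)) as HW.
  assert (Hnumer : numer y <= mu * weight y * (y - l)).
  { assert (Hslope : forall u, is_derive (fun u => mu * weight y * (u - l) - numer u) u
                       (mu * weight y - mu * (1 + u) ^ k * u ^ m * (u - l))).
    { intros u.
      assert (Haff : is_derive (fun u => mu * weight y * (u - l)) u (mu * weight y))
        by (auto_derive; [easy|ring]).
      exact (@is_derive_minus R_AbsRing R_NormedModule _ _ u _ _ Haff (is_derive_numer u)). }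
    enough (mu * weight y * (l - l) - numer l <= mu * weight y * (y - l) - numer y)
      by (rewrite numer_at_l in *; lra).
    apply (le_of_is_derive_nonneg _ _ l y ltac:(lra) (fun u _ => Hslope u)).
    - intros u _; apply (continuity_pt_of_is_derive _ _ _ (Hslope u)).
    - intros u Hu.
      assert ((1 + u) ^ k * u ^ m * (u - l) <= weight u).
      { unfold weight; simpl pow.
        assert (0 <= (1 + u) ^ k * u ^ m) by (apply Rmult_le_pos; apply pow_le; lra).
        nra. }
      pose proof (weight_le u y ltac:(lra)); nra. }
  unfold psi; apply Rle_div_l; [easy|]; nra.
Qed.

End Psi.

Theorem lemma3p8 (n m : nat) (a b lam : R) :
  (1 <= n)%nat -> 0 < a -> 0 < b ->
  mu m n a b 0 <= INR n ->
  0 <= lam < a ->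
  mu m n a b lam * (1 + lam) = INR n ->
  convex_on (psi_tilde m n a b lam) (fun x => 0 < x) /\
  (forall x, lam <= x <= a -> psi_tilde m n a b lam x <= b / a * x).
Proof.
  (* [mu_0 <= n] only serves to make [lam] exist, which is assumed here. *)
  intros Hn Ha Hb _ Hlam Hmu.
  destruct n as [|k]; [lia|].
  set (mu0 := mu m (S k) a b lam) in *.
  assert (Hpsi : forall x, psi_tilde m (S k) a b lam x = psi k m mu0 lam x)
    by (intros x; unfold psi_tilde; rewrite Nat.sub_succ, Nat.sub_0_r; reflexivity).
  assert (Hconv := psi_convex k m mu0 lam Hmu (proj1 Hlam)).
  assert (Hpsi_a : psi k m mu0 lam a = b).
  { pose proof (Iint_pos m (S k) lam a Hlam).
    unfold psi, numer, weight, mu0, mu; rewrite Nat.sub_succ, Nat.sub_0_r.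
    assert (0 < (1 + a) ^ S k) by (apply pow_lt; lra).
    assert (0 < a ^ m) by (apply pow_lt; lra).
    field; lra. }
  split.
  - intros x y t Hx Hy Ht; rewrite !Hpsi; now apply Hconv.
  - intros x Hx; rewrite Hpsi.
    destruct (Req_dec x lam) as [->|Hne].
    + rewrite psi_at_l; apply Rmult_le_pos; [apply Rdiv_le_0_compat|]; lra.
    + (* [lam] may be [0], outside the domain of convexity. *)
      assert (Hchord := convex_le_chord_from_zero _ _ mu0 lam x a Hconv
                          ltac:(intros; lra) ltac:(lra) ltac:(lra)
                          (fun y Hy => psi_le_linear k m mu0 lam Hmu (proj1 Hlam) y (proj1 Hy))).
      rewrite Hpsi_a in Hchord.
      enough (0 <= b / a * x - (x - lam) / (a - lam) * b) by lra.
      replace (b / a * x - (x - lam) / (a - lam) * b)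
        with (b * lam * (a - x) / (a * (a - lam))) by (field; lra).
      apply Rdiv_le_0_compat; [|apply Rmult_lt_0_compat]; [|lra|lra].
      apply Rmult_le_pos; [apply Rmult_le_pos|]; lra.
Qed.
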